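(* Let $G_0,G_1\in\mathbb{Z}$, let $(G_n)_{n\ge0}$ satisfy $G_n=G_{n-1}+G_{n-2}$ for $n\ge2$, and let $\mu = G_1^2 - G_0 G_1 - G_0^2$. Let $k \geq 1$ be odd and set $\ell_k = \gcd(G_{k+1} - G_1,\, G_{k+2} - G_2)$. If $2\mu$ divides $\ell_k$, then $\mathcal{G}^2_{G_0,G_1}(k\ell) = |2\mu|$ for all odd integers $\ell \geq 1$.
   Context: $\mathcal{G}^2_{G_0,G_1}(m)=\gcd\{\sum_{i=1}^m G_{n+i}^2 : n\ge 0\}$ (nonnegative gcd of this infinite set of integers). *)

From mathcomp Require Import all_boot all_order all_algebra.
Set Implicit Arguments. Unset Strict Implicit. Unset Printing Implicit Defensive.
Import Order.TTheory GRing.Theory Num.Theory.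
Local Open Scope ring_scope.

Fixpoint Gpair (G0 G1 : int) (n : nat) : int * int :=
  match n with
  | O => (G0, G1)
  | S m => let p := Gpair G0 G1 m in (p.2, p.1 + p.2)
  end.

Definition Gseq (G0 G1 : int) (n : nat) : int := (Gpair G0 G1 n).1.

Definition is_gcd_of_range (S : nat -> int) (d : int) : Prop :=
  0 <= d /\ (forall n, (d %| S n)%Z) /\
  (forall e : int, (forall n, (e %| S n)%Z) -> (e %| d)%Z).

Definition sqsum (G0 G1 : int) (m n : nat) : int :=
  \sum_(1 <= i < m.+1) (Gseq G0 G1 (n + i)) ^+ 2.

Definition Gcal2_is (G0 G1 : int) (m : nat) (g : int) : Prop :=
  is_gcd_of_range (sqsum G0 G1 m) g.

From mathcomp Require Import all_boot all_order all_algebra.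
From mathcomp Require Import ring.
Set Implicit Arguments. Unset Strict Implicit. Unset Printing Implicit Defensive.
Import Order.TTheory GRing.Theory Num.Theory.
Local Open Scope ring_scope.

(* With P_n = G_n G_(n+1), the sum of m consecutive squares telescopes to
   P_(n+m) - P_n.  The hypothesis 2mu | l_k makes G periodic modulo 2mu with
   period k, hence with period k l, so 2mu divides every sum of k l
   consecutive squares.  Conversely, Cassini's identity
   G_(n+1)^2 - G_n G_(n+1) - G_n^2 = (-1)^n mu gives
   P_(n+2) - 3 P_(n+1) + P_n = -(-1)^n mu, so for odd m the sums starting at
   n = 2, 1, 0 combine with coefficients 1, -3, 1 to exactly 2mu. *)

Lemma dvdz_norml (d x : int) : (`|d| %| x)%Z = (d %| x)%Z.
Proof. by rewrite !dvdzE; case: d. Qed.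

Lemma dvdz_normr (d x : int) : (d %| `|x|)%Z = (d %| x)%Z.
Proof. by rewrite !dvdzE; case: x. Qed.

Lemma is_gcd_of_range_norm (S : nat -> int) (d : int) :
  (forall n, (d %| S n)%Z) ->
  (forall e, (forall n, (e %| S n)%Z) -> (e %| d)%Z) ->
  is_gcd_of_range S `|d|.
Proof.
move=> dvd_d max_d; split; first exact: normr_ge0.
by split=> [n | e /max_d]; rewrite ?dvdz_norml ?dvdz_normr.
Qed.

Lemma fibonacci_rec_dvd (u : nat -> int) (d : int) :
  (forall n, u n.+2 = u n + u n.+1) ->
  (d %| u 0%N)%Z -> (d %| u 1%N)%Z -> forall n, (d %| u n)%Z.
Proof.
move=> u_rec dvd_u0 dvd_u1 n.
suff: (d %| u n)%Z /\ (d %| u n.+1)%Z by case.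
elim: n => [|n [dvd_un dvd_uSn]]; first by [].
by split=> //; rewrite u_rec rpredD.
Qed.

Section GeneralizedFibonacci.

Variables G0 G1 : int.

Local Notation G := (Gseq G0 G1).
Local Notation mu := (G1 ^+ 2 - G0 * G1 - G0 ^+ 2).

Lemma GseqSS n : G n.+2 = G n + G n.+1.
Proof. by []. Qed.

Lemma Gseq_cassini n : G n.+1 ^+ 2 - G n * G n.+1 - G n ^+ 2 = (-1) ^+ n * mu.
Proof.
elim: n => [|n IHn]; first by rewrite mul1r.
by rewrite (exprS (-1)) mulN1r mulNr -IHn GseqSS; ring.
Qed.

Lemma Gseq_prod_rec n :
  G n.+2 * G n.+3 = 3 * (G n.+1 * G n.+2) - G n * G n.+1 - (-1) ^+ n * mu.
Proof. by rewrite -Gseq_cassini !GseqSS; ring. Qed.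

Lemma sqsum_telescope m n :
  sqsum G0 G1 m n = G (n + m) * G (n + m).+1 - G n * G n.+1.
Proof.
elim: m => [|m IHm]; first by rewrite /sqsum big_geq // addn0 subrr.
by rewrite /sqsum big_nat_recr //= -/(sqsum G0 G1 m n) IHm addnS GseqSS; ring.
Qed.

Lemma sqsum_second_diff m :
  sqsum G0 G1 m 2 - 3 * sqsum G0 G1 m 1 + sqsum G0 G1 m 0 = (1 - (-1) ^+ m) * mu.
Proof.
rewrite !sqsum_telescope add2n add1n add0n.
by rewrite (Gseq_prod_rec m) (Gseq_prod_rec 0); ring.
Qed.

Lemma Gseq_shift_dvd (d : int) k :
  (d %| G k.+1 - G 1)%Z -> (d %| G k.+2 - G 2)%Z ->
  forall j, (d %| G (j + k) - G j)%Z.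
Proof.
move=> dvd_1 dvd_2; apply: fibonacci_rec_dvd => [j | | //].
- by rewrite !addSn !GseqSS; ring.
- have -> : G (0 + k) - G 0 = (G k.+2 - G 2) - (G k.+1 - G 1).
    by rewrite add0n !GseqSS; ring.
  exact: rpredB.
Qed.

Lemma Gseq_shiftM_dvd (d : int) k :
  (forall j, (d %| G (j + k) - G j)%Z) ->
  forall l j, (d %| G (j + k * l) - G j)%Z.
Proof.
move=> dvd_k; elim=> [|l IHl] j; first by rewrite muln0 addn0 subrr dvdz0.
have -> : G (j + k * l.+1) - G j =
          (G (j + k * l + k) - G (j + k * l)) + (G (j + k * l) - G j).
  by rewrite mulnS (addnC k) addnA; ring.
by rewrite rpredD.
Qed.

Lemma sqsum_dvd (d : int) m :
  (forall j, (d %| G (j + m) - G j)%Z) -> forall n, (d %| sqsum G0 G1 m n)%Z.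
Proof.
move=> dvd_m n; rewrite sqsum_telescope.
have -> : G (n + m) * G (n + m).+1 - G n * G n.+1 =
          (G (n + m) - G n) * G (n + m).+1 + G n * (G (n.+1 + m) - G n.+1).
  by rewrite addSn; ring.
by apply: rpredD; [apply: dvdz_mulr | apply: dvdz_mull].
Qed.

End GeneralizedFibonacci.

Theorem theorem4p11 (G0 G1 : int) (k : nat) :
  (1 <= k)%N -> odd k ->
  let mu := G1 ^+ 2 - G0 * G1 - G0 ^+ 2 in
  let lk := gcdz (Gseq G0 G1 k.+1 - Gseq G0 G1 1) (Gseq G0 G1 k.+2 - Gseq G0 G1 2) in
  (2 * mu %| lk)%Z ->
  forall l : nat, (1 <= l)%N -> odd l ->
    Gcal2_is G0 G1 (k * l) `|2 * mu|.
Proof.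
move=> _ odd_k mu lk dvd_lk l _ odd_l.
have period_k := Gseq_shift_dvd (dvdz_trans dvd_lk (dvdz_gcdl _ _))
                                (dvdz_trans dvd_lk (dvdz_gcdr _ _)).
apply: is_gcd_of_range_norm => [|e dvd_e].
  exact: sqsum_dvd (Gseq_shiftM_dvd period_k l).
have <- : sqsum G0 G1 (k * l) 2 - 3 * sqsum G0 G1 (k * l) 1
          + sqsum G0 G1 (k * l) 0 = 2 * mu.
  by rewrite sqsum_second_diff -signr_odd oddM odd_k odd_l.
by rewrite rpredD ?rpredB ?dvdz_mull.
Qed.
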